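(* Let $ABC$ be a triangle with incenter $I$, and let $H_A, H_B, H_C$ be the orthocenters of the triangles $BIC$, $CIA$, $AIB$ respectively. Then the triangles $AH_BH_C$, $BH_CH_A$, $CH_AH_B$ have a common orthocenter, namely the Nagel point $N_a$ of $ABC$.
   Context: The Nagel point of $ABC$ is the common point of the lines joining each vertex to the point where the excircle opposite that vertex touches the opposite side. *)

From mathcomp Require Import all_boot all_order all_algebra.
Set Implicit Arguments. Unset Strict Implicit. Unset Printing Implicit Defensive.
Import Order.TTheory GRing.Theory Num.Theory.
Local Open Scope ring_scope.

Section Geom.
Variable R : realFieldType.
Definition point := (R * R)%type.

Definition vsub (P Q : point) : point := (P.1 - Q.1, P.2 - Q.2).
Definition dot (u v : point) : R := u.1 * v.1 + u.2 * v.2.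
Definition cross (u v : point) : R := u.1 * v.2 - u.2 * v.1.

(* (signed, doubled) area orientation of P Q X *)
Definition orient (P Q X : point) : R := cross (vsub Q P) (vsub X P).

Definition collinear (P Q X : point) : Prop := orient P Q X = 0.
Definition triangle (A B C : point) : Prop := ~ collinear A B C.

(* X lies on the line through P and Q (P <> Q assumed where used) *)
Definition on_line (X P Q : point) : Prop := orient P Q X = 0.

Definition strictly_inside (X A B C : point) : Prop :=
  0 < orient A B X * orient A B C /\
  0 < orient B C X * orient B C A /\
  0 < orient C A X * orient C A B.

(* Circle with center J and radius r > 0 is tangent to the line PQ:
   the distance from J to line PQ equals r (written without square roots:
   dist^2 = orient^2 / |PQ|^2). *)
Definition tangent_line (J : point) (r : R) (P Q : point) : Prop :=
  (orient P Q J) ^+ 2 = r ^+ 2 * dot (vsub Q P) (vsub Q P).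

Definition incenter (I A B C : point) : Prop :=
  strictly_inside I A B C /\
  exists r : R, 0 < r /\ tangent_line I r B C /\ tangent_line I r C A
                      /\ tangent_line I r A B.

Definition excircle_opp (J : point) (r : R) (A B C : point) : Prop :=
  0 < r /\ tangent_line J r B C /\ tangent_line J r A B /\
  tangent_line J r A C /\ orient B C J * orient B C A < 0.

Definition touch_point (T J B C : point) : Prop :=
  on_line T B C /\ dot (vsub T J) (vsub C B) = 0.

Definition orthocenter (H P Q X : point) : Prop :=
  dot (vsub H P) (vsub X Q) = 0 /\
  dot (vsub H Q) (vsub P X) = 0 /\
  dot (vsub H X) (vsub Q P) = 0.

End Geom.

(* Work in barycentric coordinates relative to ABC.  The incircle yields the
   side lengths a, b, c (the oriented areas of BCI, CAI, ABI divided by the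
   inradius), and then I = (a : b : c), the excenter opposite A is
   (-a : b : c), its touch point is (0 : a+c-b : a+b-c), the Nagel point is
   (b+c-a : c+a-b : a+b-c) and the orthocenter of BIC is (a : c-a : b-a).
   Each point is pinned down by a uniqueness statement (orthocenter, foot of a
   perpendicular, intersection of two lines) once its candidate is checked,
   and every check is a rational identity in a, b, c, since the inner product
   of two displacements is a quadratic form in their barycentric coordinates
   with coefficients a^2, b^2, c^2.  All formulas are cyclically symmetric,
   so the three orthocenter claims reduce to one. *)

From mathcomp Require Import all_boot all_order all_algebra.
From mathcomp Require Import ring lra.
Set Implicit Arguments. Unset Strict Implicit. Unset Printing Implicit Defensive.
Import Order.TTheory GRing.Theory Num.Theory.
Local Open Scope ring_scope.

Section PlaneGeometry.
Variable R : realFieldType.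
Implicit Types (A B C P Q U V X Y H I J N T : point R) (u v w : point R).
Implicit Types (a b c k r x y z : R).

Ltac coords := rewrite /orient /cross /dot /vsub /=.

Definition perp u : point R := (- u.2, u.1).

Definition sqdist P Q : R := dot (vsub P Q) (vsub P Q).

(* The junk value for x + y + z = 0 is the origin. *)
Definition bary A B C x y z : point R :=
  ((x * A.1 + y * B.1 + z * C.1) / (x + y + z),
   (x * A.2 + y * B.2 + z * C.2) / (x + y + z)).

(* Normalised barycentric coordinate of P at vertex A; those at B and C are
   areal B C A P and areal C A B P. *)
Definition areal A B C P : R := orient B C P / orient A B C.

Definition side_lengths A B C a b c : Prop :=
  [/\ 0 < a, 0 < b & 0 < c] /\
  [/\ a ^+ 2 = sqdist C B, b ^+ 2 = sqdist A C & c ^+ 2 = sqdist B A].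

Definition nagel A B C a b c : point R :=
  bary A B C (b + c - a) (c + a - b) (a + b - c).

Lemma orient_rot A B C : orient B C A = orient A B C.
Proof. by coords; ring. Qed.

Lemma orient_swap P Q X : orient P X Q = - orient P Q X.
Proof. by coords; ring. Qed.

Lemma sqdistC P Q : sqdist P Q = sqdist Q P.
Proof. by rewrite /sqdist; coords; ring. Qed.

Lemma sqdist_eq0 P Q : (sqdist P Q == 0) = (P == Q).
Proof.
case: P Q => [p1 p2] [q1 q2]; rewrite /sqdist /dot /vsub /= -!expr2.
by rewrite paddr_eq0 ?sqr_ge0 // !sqrf_eq0 !subr_eq0 xpair_eqE.
Qed.

Lemma side_lengths_rot A B C a b c :
  side_lengths A B C a b c -> side_lengths B C A b c a.
Proof. by case=> [[? ? ?] [? ? ?]]. Qed.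

Lemma bary_rot A B C x y z : bary B C A y z x = bary A B C x y z.
Proof.
rewrite /bary (_ : y + z + x = x + y + z); last by ring.
by congr (_ / _, _ / _); ring.
Qed.

Lemma nagel_rot A B C a b c : nagel B C A b c a = nagel A B C a b c.
Proof. by rewrite /nagel bary_rot. Qed.

Lemma bary_scale A B C x y z k : k != 0 ->
  bary A B C (x * k) (y * k) (z * k) = bary A B C x y z.
Proof.
move=> k_neq0; have cancel_k n s : (n * k) / (s * k) = n / s.
  by rewrite invfM mulrACA divff ?mulr1.
have factor_k p q t : x * k * p + y * k * q + z * k * t = (x * p + y * q + z * t) * k.
  by ring.
by rewrite /bary -!mulrDl !factor_k !cancel_k.
Qed.

Lemma bary_orient A B C P : orient A B C != 0 ->
  P = bary A B C (orient B C P) (orient C A P) (orient A B P).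
Proof.
rewrite /bary; have -> : orient B C P + orient C A P + orient A B P = orient A B C.
  by coords; ring.
move: A B C P => [a1 a2] [b1 b2] [c1 c2] [p1 p2]; coords => hD.
by congr (_, _); field.
Qed.

Lemma areal_A A B C : orient A B C != 0 -> areal A B C A = 1.
Proof. by move=> hD; rewrite /areal orient_rot divff. Qed.

Lemma areal_B A B C : areal A B C B = 0.
Proof. by rewrite /areal (_ : orient B C B = 0) ?mul0r //; coords; ring. Qed.

Lemma areal_C A B C : areal A B C C = 0.
Proof. by rewrite /areal (_ : orient B C C = 0) ?mul0r //; coords; ring. Qed.

Lemma areal_bary_A A B C x y z : orient A B C != 0 -> x + y + z != 0 ->
  areal A B C (bary A B C x y z) = x / (x + y + z).
Proof.
move: A B C => [a1 a2] [b1 b2] [c1 c2]; rewrite /areal /bary; coords => hD hs.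
by field; rewrite hD hs.
Qed.

Lemma areal_bary_B A B C x y z : orient A B C != 0 -> x + y + z != 0 ->
  areal B C A (bary A B C x y z) = y / (x + y + z).
Proof.
have -> : x + y + z = y + z + x by ring.
by move=> hD hs; rewrite -(bary_rot A B C) areal_bary_A // orient_rot.
Qed.

Lemma areal_bary_C A B C x y z : orient A B C != 0 -> x + y + z != 0 ->
  areal C A B (bary A B C x y z) = z / (x + y + z).
Proof.
have -> : x + y + z = z + x + y by ring.
move=> hD hs; rewrite -(bary_rot A B C) -(bary_rot B C A).
by rewrite areal_bary_A // 2!orient_rot.
Qed.

Lemma cross_areal A B C P Q U V : orient A B C != 0 ->
  cross (vsub P Q) (vsub U V) = orient A B C *
    ((areal B C A P - areal B C A Q) * (areal C A B U - areal C A B V)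
     - (areal C A B P - areal C A B Q) * (areal B C A U - areal B C A V)).
Proof.
rewrite /areal (orient_rot A B C) -(orient_rot C A B).
move: A B C P Q U V => [a1 a2] [b1 b2] [c1 c2] [p1 p2] [q1 q2] [u1 u2] [v1 v2].
by coords => hD; field.
Qed.

Lemma orient_areal A B C P : orient A B C != 0 ->
  orient B C P = orient A B C * areal A B C P.
Proof. by move=> hD; rewrite /areal mulrC divfK. Qed.

Lemma lagrange_identity u v : dot u u * dot v v = dot u v ^+ 2 + cross u v ^+ 2.
Proof. by coords; ring. Qed.

Lemma side_lt_sum A B C a b c : orient A B C != 0 -> side_lengths A B C a b c ->
  a < b + c.
Proof.
move=> hD [[a_gt0 b_gt0 c_gt0] [a2 b2 c2]].
have cosine_law : a ^+ 2 = b ^+ 2 + c ^+ 2 - 2 * dot (vsub B A) (vsub C A).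
  by rewrite a2 b2 c2 /sqdist; coords; ring.
have lagrange : (b * c) ^+ 2 = dot (vsub B A) (vsub C A) ^+ 2 + orient A B C ^+ 2.
  by rewrite exprMn b2 c2 sqdistC mulrC lagrange_identity.
have D2_gt0 : 0 < orient A B C ^+ 2 by rewrite exprn_even_gt0.
move: (dot _ _) (orient A B C) cosine_law lagrange D2_gt0 {a2 b2 c2 hD}.
move=> d D cosine_law lagrange D2_gt0.
have cauchy_schwarz : - (b * c) < d.
  by move: (b * c) (mulr_gt0 b_gt0 c_gt0) lagrange => m; nra.
nra.
Qed.

Lemma dot_vsubB P X Y w : dot (vsub X Y) w = dot (vsub X P) w - dot (vsub Y P) w.
Proof. by coords; ring. Qed.

Lemma cross_perp u v : cross (perp u) (perp v) = cross u v.
Proof. by rewrite /perp; coords; ring. Qed.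

Lemma dot_perp_vsub P Q X Y :
  dot (vsub X Y) (perp (vsub Q P)) = orient P Q X - orient P Q Y.
Proof. by rewrite /perp; coords; ring. Qed.

Lemma eq_of_orthogonal u v P Q : cross u v != 0 ->
  dot (vsub P Q) u = 0 -> dot (vsub P Q) v = 0 -> P = Q.
Proof.
move=> huv hu hv.
have coord_eq x y : (x - y) * cross u v = 0 -> x = y.
  by move/eqP; rewrite mulf_eq0 (negbTE huv) orbF subr_eq0 => /eqP.
have eq1 : P.1 = Q.1.
  apply: coord_eq; transitivity (v.2 * dot (vsub P Q) u - u.2 * dot (vsub P Q) v).
    by coords; ring.
  by rewrite hu hv !mulr0 subrr.
have eq2 : P.2 = Q.2.
  apply: coord_eq; transitivity (u.1 * dot (vsub P Q) v - v.1 * dot (vsub P Q) u).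
    by coords; ring.
  by rewrite hu hv !mulr0 subrr.
by case: P Q {hu hv} eq1 eq2 => [? ?] [? ?] /= -> ->.
Qed.

Lemma orthocenter_unique H H' P Q X : orient P Q X != 0 ->
  orthocenter H P Q X -> orthocenter H' P Q X -> H = H'.
Proof.
move=> hPQX [hP [hQ _]] [hP' [hQ' _]].
apply: (eq_of_orthogonal (u := vsub X Q) (v := vsub P X)).
- by rewrite (_ : cross _ _ = orient P Q X) //; coords; ring.
- by rewrite (dot_vsubB P) hP hP' subrr.
- by rewrite (dot_vsubB Q) hQ hQ' subrr.
Qed.

Lemma line_intersection_unique X Y P Q U V : cross (vsub Q P) (vsub V U) != 0 ->
  on_line X P Q -> on_line X U V -> on_line Y P Q -> on_line Y U V -> X = Y.
Proof.
move=> hPQUV hXPQ hXUV hYPQ hYUV.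
apply: (eq_of_orthogonal (u := perp (vsub Q P)) (v := perp (vsub V U))).
- by rewrite cross_perp.
- by rewrite dot_perp_vsub hXPQ hYPQ subrr.
- by rewrite dot_perp_vsub hXUV hYUV subrr.
Qed.

Lemma touch_point_unique T T' J B C : B != C ->
  touch_point T J B C -> touch_point T' J B C -> T = T'.
Proof.
move=> hBC [hT hTJ] [hT' hT'J].
apply: (eq_of_orthogonal (u := vsub C B) (v := perp (vsub C B))).
- rewrite (_ : cross _ _ = sqdist C B) ?sqdist_eq0 1?eq_sym //.
  by rewrite /sqdist /perp; coords; ring.
- by rewrite (dot_vsubB J) hTJ hT'J subrr.
- by rewrite dot_perp_vsub hT hT' subrr.
Qed.

Lemma incenter_bary A B C I : triangle A B C -> incenter I A B C ->
  exists a b c, side_lengths A B C a b c /\ I = bary A B C a b c.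
Proof.
move=> hT [[hAB [hBC hCA]] [r [r_gt0 [tBC [tCA tAB]]]]].
have hD : orient A B C != 0 by apply/eqP.
rewrite (orient_rot A B C) in hBC; rewrite -(orient_rot C A B) in hCA.
(* The oriented areas of BCI, CAI, ABI have the sign of ABC and absolute
   value r times the side; k = sign(ABC) / r turns them into the sides. *)
set k := orient A B C / (r * `|orient A B C|).
have k_neq0 : k != 0.
  by rewrite /k mulf_neq0 // invr_eq0 mulf_neq0 ?normr_eq0 // gt_eqF.
have scaled_gt0 x : 0 < x * orient A B C -> 0 < x * k.
  by move=> hx; rewrite /k mulrA divr_gt0 // mulr_gt0 // normr_gt0.
have scaled_sqr x y : x ^+ 2 = r ^+ 2 * y -> (x * k) ^+ 2 = y.
  move=> hx; rewrite exprMn hx /k expr_div_n exprMn real_normK ?num_real //.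
  by field; rewrite hD gt_eqF.
exists (orient B C I * k), (orient C A I * k), (orient A B I * k); split.
  by split; split; [apply: scaled_gt0 | apply: scaled_gt0 | apply: scaled_gt0
                   | apply: scaled_sqr | apply: scaled_sqr | apply: scaled_sqr].
by rewrite bary_scale //; apply: bary_orient.
Qed.

Section Triangle.
Variables (A B C : point R) (a b c : R).
Hypotheses (hD : orient A B C != 0) (hL : side_lengths A B C a b c).

Let hD_BCA : orient B C A != 0. Proof. by rewrite orient_rot. Qed.
Let hD_CAB : orient C A B != 0. Proof. by rewrite 2!orient_rot. Qed.

Local Notation α := (areal A B C).
Local Notation β := (areal B C A).
Local Notation γ := (areal C A B).

Lemma dot_areal P Q U V :
  dot (vsub P Q) (vsub U V) =
    - (a ^+ 2 * ((β P - β Q) * (γ U - γ V) + (γ P - γ Q) * (β U - β V))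
     + b ^+ 2 * ((γ P - γ Q) * (α U - α V) + (α P - α Q) * (γ U - γ V))
     + c ^+ 2 * ((α P - α Q) * (β U - β V) + (β P - β Q) * (α U - α V))) / 2.
Proof.
have [_ [-> -> ->]] := hL.
rewrite /sqdist /areal (orient_rot A B C) -(orient_rot C A B).
move: A B C P Q U V hD => [a1 a2] [b1 b2] [c1 c2] [p1 p2] [q1 q2] [u1 u2] [v1 v2].
by coords => hD'; field.
Qed.

Lemma side_lt_sums : [/\ a < b + c, b < c + a & c < a + b].
Proof.
have hL1 := side_lengths_rot hL; have hL2 := side_lengths_rot hL1.
split; first exact: side_lt_sum hD hL.
  by apply: side_lt_sum hL1; rewrite orient_rot.
by apply: side_lt_sum hL2; rewrite 2!orient_rot.
Qed.

Ltac areal_simpl :=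
  rewrite ?areal_B ?areal_C ?(areal_A hD) ?(areal_A hD_BCA) ?(areal_A hD_CAB)
          ?(areal_bary_A hD) ?(areal_bary_B hD) ?(areal_bary_C hD).

Ltac nonzero :=
  have [? ? ?] := side_lt_sums; have [[? ? ?] _] := hL;
  repeat (apply/andP; split); apply: lt0r_neq0; lra.

Ltac solve_areal := areal_simpl; try field; nonzero.

Lemma excenter_bary J r : excircle_opp J r A B C -> J = bary A B C (- a) b c.
Proof.
case=> _ [tBC [tAB [tAC opp]]].
have [[a_gt0 b_gt0 c_gt0] [a2 b2 c2]] := hL.
have [ltA ltB ltC] := side_lt_sums.
have sum : orient B C J + orient C A J + orient A B J = orient A B C by coords; ring.
have oAC : orient A C J = - orient C A J by coords; ring.
rewrite /tangent_line -/(sqdist C B) -a2 in tBC.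
rewrite /tangent_line -/(sqdist B A) -c2 in tAB.
rewrite /tangent_line -/(sqdist C A) sqdistC -b2 oAC sqrrN in tAC.
rewrite (orient_rot A B C) in opp.
rewrite {1}(bary_orient J hD); move: sum tBC tAB tAC opp.
move: (orient B C J) (orient C A J) (orient A B J) => u v w sum tu tw tv opp.
set k := - u / a.
have eu : u = - a * k by rewrite /k; field; rewrite lt0r_neq0.
have kD_gt0 : 0 < k * orient A B C by rewrite /k mulrAC mulNr divr_gt0 // oppr_gt0.
have k_neq0 : k != 0 by apply: contraTneq kD_gt0 => ->; rewrite mul0r ltxx.
have k2_gt0 : 0 < k ^+ 2 by rewrite exprn_even_gt0.
have r2 : r ^+ 2 = k ^+ 2.
  apply: (mulIf (expf_neq0 2 (lt0r_neq0 a_gt0))).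
  by rewrite -tu eu exprMn sqrrN mulrC.
have sqr_scaled x l : x ^+ 2 = r ^+ 2 * l ^+ 2 -> x = l * k \/ x = - (l * k).
  move=> hx; have : x ^+ 2 == (l * k) ^+ 2 by rewrite hx exprMn -r2 mulrC.
  by rewrite eqf_sqr => /orP[] /eqP; [left | right].
(* Any other sign pattern than (-, +, +) makes k * orient A B C negative by
   the triangle inequality. *)
have [ev|ev] := sqr_scaled v b tv; have [ew|ew] := sqr_scaled w c tw.
- by rewrite eu ev ew bary_scale.
all: by exfalso; move: kD_gt0; rewrite -sum eu ev ew; nra.
Qed.

Lemma touch_point_bary J T : J = bary A B C (- a) b c -> touch_point T J B C ->
  T = bary A B C 0 (a + c - b) (a + b - c).
Proof.
move=> -> hT; have hBC : B != C.
  by apply: contraNneq hD => ->; apply/eqP; coords; ring.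
apply: (touch_point_unique hBC hT); split.
- by rewrite /on_line /orient (cross_areal _ _ _ _ hD); solve_areal.
- by rewrite dot_areal; solve_areal.
Qed.

Lemma orthocenter_BIC_bary I H : I = bary A B C a b c -> orthocenter H B I C ->
  H = bary A B C a (c - a) (b - a).
Proof.
move=> -> hH; apply: (orthocenter_unique _ hH).
  rewrite orient_swap oppr_eq0 (orient_areal _ hD) mulf_neq0 // areal_bary_A //.
    by have [[a_gt0 b_gt0 c_gt0] _] := hL; rewrite lt0r_neq0 // divr_gt0 // !addr_gt0.
  by nonzero.
by rewrite /orthocenter !dot_areal; split; [|split]; solve_areal.
Qed.

Lemma nagel_unique N TA TB :
  TA = bary A B C 0 (a + c - b) (a + b - c) ->
  TB = bary B C A 0 (b + a - c) (b + c - a) ->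
  on_line N A TA -> on_line N B TB -> N = nagel A B C a b c.
Proof.
move=> -> ->; rewrite (bary_rot A B C) => hNA hNB.
apply: (line_intersection_unique _ hNA hNB).
- have -> : cross (vsub (bary A B C 0 (a + c - b) (a + b - c)) A)
                  (vsub (bary A B C (b + c - a) 0 (b + a - c)) B) =
      orient A B C * ((a + b - c) * (a + b + c) / (4 * a * b)).
    by rewrite (cross_areal _ _ _ _ hD); solve_areal.
  have [[a_gt0 b_gt0 c_gt0] _] := hL; have [_ _ ltC] := side_lt_sums.
  rewrite mulf_neq0 // lt0r_neq0 // divr_gt0 ?mulr_gt0 //; lra.
- by rewrite /on_line /orient (cross_areal _ _ _ _ hD); solve_areal.
- by rewrite /on_line /orient (cross_areal _ _ _ _ hD); solve_areal.
Qed.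

Lemma nagel_orthocenter :
  orthocenter (nagel A B C a b c) A (bary B C A b (a - b) (c - b))
    (bary C A B c (b - c) (a - c)).
Proof.
rewrite /nagel (bary_rot B C A) !(bary_rot A B C) /orthocenter !dot_areal.
by split; [|split]; solve_areal.
Qed.

End Triangle.
End PlaneGeometry.

Unset Implicit Arguments.

Theorem proposition4p1 (R : realFieldType)
    (A B C I HA HB HC JA JB JC TA TB TC Na : point R) (rA rB rC : R) :
  triangle A B C ->
  incenter I A B C ->
  orthocenter HA B I C ->
  orthocenter HB C I A ->
  orthocenter HC A I B ->
  (* excircles opposite A, B, C and their touch points with BC, CA, AB *)
  excircle_opp JA rA A B C -> touch_point TA JA B C ->
  excircle_opp JB rB B C A -> touch_point TB JB C A ->
  excircle_opp JC rC C A B -> touch_point TC JC A B ->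
  (* Na is the Nagel point: common point of A TA, B TB, C TC *)
  on_line Na A TA -> on_line Na B TB -> on_line Na C TC ->
  orthocenter Na A HB HC /\ orthocenter Na B HC HA /\ orthocenter Na C HA HB.
Proof.
move=> hT hI hHA hHB hHC hJA hTA hJB hTB _ _ hNA hNB _.
have hD : orient A B C != 0 by apply/eqP.
have hD1 : orient B C A != 0 by rewrite orient_rot.
have hD2 : orient C A B != 0 by rewrite 2!orient_rot.
have [a [b [c [hL eI]]]] := incenter_bary hT hI.
have hL1 := side_lengths_rot hL; have hL2 := side_lengths_rot hL1.
have eI1 : I = bary B C A b c a by rewrite bary_rot.
have eI2 : I = bary C A B c a b by rewrite bary_rot.
have eTA := touch_point_bary hD hL (excenter_bary hD hL hJA) hTA.
have eTB := touch_point_bary hD1 hL1 (excenter_bary hD1 hL1 hJB) hTB.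
rewrite (nagel_unique hD hL eTA eTB hNA hNB).
rewrite (orthocenter_BIC_bary hD hL eI hHA) (orthocenter_BIC_bary hD1 hL1 eI1 hHB).
rewrite (orthocenter_BIC_bary hD2 hL2 eI2 hHC).
split; last split.
- exact: nagel_orthocenter hD hL.
- by rewrite -(nagel_rot A B C); apply: nagel_orthocenter hD1 hL1.
- by rewrite -(nagel_rot A B C) -(nagel_rot B C A); apply: nagel_orthocenter hD2 hL2.
Qed.
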